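(* Let $M,N\ge 1$ be integers and $0<t_1<t_2<\dots<t_N$. Let $R$ be the $N\times N$ matrix with entries $R_{lm}=\min(t_l,t_m)$, $l,m=1,\dots,N$. Let $\Sigma_{MN}$ be a symmetric positive definite $MN\times MN$ matrix and let $K$ be a symmetric positive definite $M\times M$ matrix. Let $C_{\Sigma_{MN}}$, $C_R$, $C_K$ be the Cholesky factors of $\Sigma_{MN}$, $R$, $K$ respectively (lower triangular with positive diagonal, $A=C_AC_A^T$). Let $R\otimes K=E\Lambda E^T$ be an eigendecomposition with $E$ orthogonal and $\Lambda$ diagonal with positive diagonal entries, and let $\Lambda^{1/2}$ be the diagonal matrix of the square roots of those entries. If $\epsilon$ is an $MN$-dimensional random vector with distribution $N(0,I_{MN})$, then $$\mathbf{Z}=C_{\Sigma_{MN}}\,\big(C_R^{-1}\otimes C_K^{-1}\big)\,E\,\Lambda^{1/2}\,\epsilon$$ has distribution $N(0,\Sigma_{MN})$.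
   Context: $\otimes$ denotes the Kronecker product: for $A\in\mathbb{R}^{m_A\times n_A}$ and $B$, $A\otimes B$ is the block matrix whose $(i,j)$ block is $a_{ij}B$. In the paper's application, $\Sigma_{MN}$ is the global covariance matrix of the sampled multi-asset Brownian log-return vector (with $(l,m)$ block $\Sigma(t_{\min(l,m)})$, where $\Sigma(t)$ has entries $\int_0^t\sigma_i(s)\sigma_k(s)\rho_{ik}\,ds$), and $K$ is chosen to minimize the Frobenius norm $\|\Sigma_{MN}-R\otimes K\|$; this construction (''Kronecker product approximation'', KPA) is used to generate sample paths. *)

(* mathcomp + mathcomp-analysis; Kronecker product from
   mathcomp-real-closed's mxtens (tensmx A B has (i,j) block A i j *: B). *)
From HB Require Import structures.
From mathcomp Require Import all_boot all_order all_algebra.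
From mathcomp Require Import all_classical all_reals all_analysis.
From mathcomp Require Import mxtens.
Set Implicit Arguments. Unset Strict Implicit. Unset Printing Implicit Defensive.
Import Order.TTheory GRing.Theory Num.Theory.
Local Open Scope classical_set_scope.
Local Open Scope ring_scope.

Definition spd (R : realType) (n : nat) (A : 'M[R]_n) : Prop :=
  A^T = A /\ forall x : 'cV[R]_n, x != 0 -> 0 < (x^T *m A *m x) 0 0.

Definition cholesky_factor (R : realType) (n : nat) (C A : 'M[R]_n) : Prop :=
  [/\ forall i j : 'I_n, (i < j)%N -> C i j = 0,
      forall i : 'I_n, 0 < C i i
    & A = C *m C^T].

Definition min_mx (R : realType) (N : nat) (t : 'I_N -> R) : 'M[R]_N :=
  \matrix_(l, m) Num.min (t l) (t m).

Definition has_law d (T : measurableType d) (R : realType)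
  (P : probability T R) (Y : T -> R) (mu : set R -> \bar R) : Prop :=
  forall B : set R, measurable B -> P (Y @^-1` B) = mu B.

(* Multivariate normal N(mu, S) (possibly degenerate), via the standard
   definition: every linear combination u^T X is univariate normal with mean
   u^T mu and variance u^T S u (a point mass when that variance is 0). *)
Definition is_mvnormal d (T : measurableType d) (R : realType)
  (P : probability T R) (n : nat) (X : T -> 'cV[R]_n)
  (mu : 'cV[R]_n) (S : 'M[R]_n) : Prop :=
  forall u : 'cV[R]_n,
    let m := (u^T *m mu) 0 0 in
    let v := (u^T *m S *m u) 0 0 in
    has_law P (fun w => (u^T *m X w) 0 0)
      (if v == 0 then (\d_m : set R -> \bar R) else normal_prob m (Num.sqrt v)).

From HB Require Import structures.
From mathcomp Require Import all_boot all_order all_algebra.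
From mathcomp Require Import all_classical all_reals all_analysis.
From mathcomp Require Import mxtens.
Import Order.TTheory GRing.Theory Num.Theory.
Local Open Scope classical_set_scope.
Local Open Scope ring_scope.
(* Z = F eps is a linear image of a standard normal vector, so it is
   N(0, F F^T), and it remains to see F F^T = Sigma.  The mixed-product rule
   turns (C_R^-1 (x) C_K^-1) (R (x) K) (C_R^-1 (x) C_K^-1)^T into the identity,
   and R (x) K = E Lambda E^T = (E Lambda^(1/2)) (E Lambda^(1/2))^T, so F F^T
   collapses to C_Sigma C_Sigma^T = Sigma. *)

Lemma is_mvnormal_linear {d} {T : measurableType d} {R : realType}
    {P : probability T R} {m n} {X : T -> 'cV[R]_n} {mu : 'cV[R]_n}
    {S : 'M[R]_n} (A : 'M[R]_(m, n)) :
  is_mvnormal P X mu S ->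
  is_mvnormal P (fun w => A *m X w) (A *m mu) (A *m S *m A^T).
Proof.
move=> HX u; have /= := HX (A^T *m u).
have cov : u^T *m (A *m S *m A^T) *m u = u^T *m A *m S *m (A^T *m u).
  by rewrite !mulmxA.
rewrite trmx_mul trmxK cov [u^T *m (A *m mu)]mulmxA.
by under [X in _ -> has_law P X _]funext do rewrite mulmxA.
Qed.

Lemma tensmx11 (R : pzRingType) m n :
  (1%:M : 'M[R]_m) *t (1%:M : 'M[R]_n) = 1%:M.
Proof.
apply/matrixP=> i j.
case: (mxtens_indexP i)=> i0 i1; case: (mxtens_indexP j)=> j0 j1.
rewrite tensmxE !mxE -natrM; congr (_%:R).
by rewrite (inj_eq (can_inj (@mxtens_indexK m n))) xpair_eqE mulnb.
Qed.

Lemma cholesky_factor_unitmx {R : realType} {n} {C A : 'M[R]_n} :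
  cholesky_factor C A -> C \in unitmx.
Proof.
case=> C_lower C_diag _; rewrite unitmxE det_trig; last exact/is_trig_mxP.
by rewrite unitfE; apply/prodf_neq0 => i _; exact: lt0r_neq0.
Qed.

Lemma cholesky_factor_whiten {R : realType} {n} {C A : 'M[R]_n} :
  cholesky_factor C A -> invmx C *m A *m (invmx C)^T = 1%:M.
Proof.
move=> HC; have C_unit := cholesky_factor_unitmx HC; case: HC => _ _ ->.
by rewrite mulmxA mulVmx // mul1mx trmx_inv mulmxV // unitmx_tr.
Qed.

Lemma cholesky_factor_tens_whiten {R : realType} {m n}
    {CA A : 'M[R]_m} {CB B : 'M[R]_n} :
  cholesky_factor CA A -> cholesky_factor CB B ->
  (invmx CA *t invmx CB) *m (A *t B) *m (invmx CA *t invmx CB)^T = 1%:M.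
Proof.
move=> HA HB.
by rewrite trmx_tens !tensmx_mul !cholesky_factor_whiten // tensmx11.
Qed.

Lemma mulmx_sqrt_diag_tr (R : rcfType) m n (X : 'M[R]_(m, n)) (lam : 'rV[R]_n) :
  (forall i, 0 <= lam 0 i) ->
  X *m diag_mx (map_mx Num.sqrt lam) *m (X *m diag_mx (map_mx Num.sqrt lam))^T
  = X *m diag_mx lam *m X^T.
Proof.
move=> lam_ge0; rewrite trmx_mul tr_diag_mx !mulmxA -[_ *m diag_mx _]mulmxA.
rewrite mulmx_diag; congr (X *m diag_mx _ *m _); apply/matrixP=> i j.
by rewrite !mxE [i]ord1 -expr2 sqr_sqrtr.
Qed.

Lemma kpa_factor_cov {R : realType} {m n k} {CS S : 'M[R]_(m * n)}
    {CA A : 'M[R]_m} {CB B : 'M[R]_n} {E : 'M[R]_(m * n, k)} {lam : 'rV[R]_k} :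
  cholesky_factor CS S -> cholesky_factor CA A -> cholesky_factor CB B ->
  (forall i, 0 <= lam 0 i) ->
  A *t B = E *m diag_mx lam *m E^T ->
  CS *m (invmx CA *t invmx CB) *m E *m diag_mx (map_mx Num.sqrt lam)
  *m (CS *m (invmx CA *t invmx CB) *m E *m diag_mx (map_mx Num.sqrt lam))^T
  = S.
Proof.
move=> HS HA HB lam_ge0 AB_eig; rewrite mulmx_sqrt_diag_tr //.
set W := invmx CA *t invmx CB.
have -> : CS *m W *m E *m diag_mx lam *m (CS *m W *m E)^T
          = CS *m (W *m (E *m diag_mx lam *m E^T) *m W^T) *m CS^T.
  by rewrite !trmx_mul !mulmxA.
by rewrite -AB_eig cholesky_factor_tens_whiten // mulmx1; case: HS.
Qed.

Theorem mainTheorem1 (d : measure_display) (T : measurableType d)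
  (R : realType) (P : probability T R) (M N : nat)
  (t : 'I_N -> R) (SigmaMN : 'M[R]_(N * M)) (K : 'M[R]_M)
  (CSigma : 'M[R]_(N * M)) (CR : 'M[R]_N) (CK : 'M[R]_M)
  (E : 'M[R]_(N * M)) (lam : 'rV[R]_(N * M))
  (eps : T -> 'cV[R]_(N * M)) :
  (0 < M)%N -> (0 < N)%N ->
  (forall l : 'I_N, 0 < t l) ->
  (forall l m : 'I_N, (l < m)%N -> t l < t m) ->
  spd SigmaMN -> spd K ->
  cholesky_factor CSigma SigmaMN ->
  cholesky_factor CR (min_mx t) ->
  cholesky_factor CK K ->
  E *m E^T = 1%:M -> E^T *m E = 1%:M ->
  (forall i, 0 < lam 0 i) ->
  tensmx (min_mx t) K = E *m diag_mx lam *m E^T ->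
  is_mvnormal P eps 0 1%:M ->
  is_mvnormal P
    (fun w => CSigma *m tensmx (invmx CR) (invmx CK) *m E
               *m diag_mx (map_mx Num.sqrt lam) *m eps w)
    0 SigmaMN.
Proof.
move=> _ _ _ _ _ _ HS HR HK _ _ lam_gt0 RK_eig.
move/(is_mvnormal_linear
  (CSigma *m (invmx CR *t invmx CK) *m E *m diag_mx (map_mx Num.sqrt lam))).
rewrite mulmx0 mulmx1 (kpa_factor_cov HS HR HK _ RK_eig) // => i.
exact/ltW.
Qed.
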